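(* Let $n,N\ge1$ be integers, $0<p<1$, $0<\epsilon_1<1$, and $\beta>0$ with $L=\beta n$ a positive integer. Define $$\beta_0=\frac{\log_2\left(\dfrac{\epsilon_1}{2^{n}N^2\left((1+2p-p^2)^n-1\right)}\right)}{n\log_2\left(1-\frac{1}{2}(1-p)^2\right)}.$$ If $\beta\ge\beta_0$, then in the random model described in the context, $P\big(|\mathsf{Y_{faulty}}|>1\big)<\epsilon_1$.
   Context: Model: Let $M=2^n$ and $C=\{0,1\}^n=\{\mathbf{x}_1,\dots,\mathbf{x}_M\}$ (addresses). Data parts $\mathbf{d}_1,\dots,\mathbf{d}_M$ are independent and uniform on $\{0,1\}^L$; strand $i$ is $(\mathbf{x}_i,\mathbf{d}_i)$. Each strand is transmitted $N$ times through $\mathsf{BEC}(p)$ (each symbol independently replaced by $*$ with probability $p$, independently across transmissions and strands); $\mathcal{S}_N((\mathbf{x}_i,\mathbf{d}_i))$ is the multiset of the $N$ reads of strand $i$, and $\mathcal{Y}$ the multiset of all $MN$ reads. Two words $\mathbf{u},\mathbf{v}\in\{0,1,*\}^\ell$ agree, $\mathbf{u}\cong\mathbf{v}$, if $u_k=v_k$ wherever neither is erased; reads agree if both address parts and data parts agree. A read $(\mathbf{y},\mathbf{d}')\in\mathcal{S}_N((\mathbf{x},\mathbf{d}))$ is faulty if it agrees with some read of a strand $(\tilde{\mathbf{x}},\tilde{\mathbf{d}})$ with $\tilde{\mathbf{x}}\ne\mathbf{x}$; $\mathsf{Y_{faulty}}$ is the multiset of faulty reads. *)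

From HB Require Import structures.
From mathcomp Require Import all_boot all_order all_algebra.
From mathcomp Require Import all_classical all_reals all_analysis.
Set Implicit Arguments. Unset Strict Implicit. Unset Printing Implicit Defensive.
Import Order.TTheory GRing.Theory Num.Theory.
Local Open Scope ring_scope.

(* Addresses: the 2^n words of {0,1}^n; strand x has address x. *)
Definition addr_t (n : nat) := {ffun 'I_n -> bool}.

(* An outcome of the random experiment:
   - data : the data part d_x (L bits) of each strand x,
   - eA   : erasure indicators of the address symbols of read t of strand x,
   - eD   : erasure indicators of the data symbols of read t of strand x. *)
Definition outcome (n N L : nat) :=
  ({ffun addr_t n * 'I_L -> bool} *
   {ffun addr_t n * 'I_N * 'I_n -> bool} *
   {ffun addr_t n * 'I_N * 'I_L -> bool})%type.

Section Model.
Variables (n N L : nat).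

Definition o_data (w : outcome n N L) := w.1.1.
Definition o_eA (w : outcome n N L) := w.1.2.
Definition o_eD (w : outcome n N L) := w.2.

Definition weight {R : realType} (p : R) (w : outcome n N L) : R :=
  (\prod_(i : addr_t n * 'I_L) (2^-1 : R)) *
  (\prod_(j : addr_t n * 'I_N * 'I_n) (if o_eA w j then p else 1 - p)) *
  (\prod_(j : addr_t n * 'I_N * 'I_L) (if o_eD w j then p else 1 - p)).

Definition Prob {R : realType} (p : R) (E : pred (outcome n N L)) : R :=
  \sum_(w | E w) weight p w.

(* Read t of strand x; None stands for the erasure symbol "*". *)
Definition read_addr (w : outcome n N L) (x : addr_t n) (t : 'I_N) (k : 'I_n)
  : option bool := if o_eA w (x, t, k) then None else Some (x k).
Definition read_data (w : outcome n N L) (x : addr_t n) (t : 'I_N) (k : 'I_L)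
  : option bool := if o_eD w (x, t, k) then None else Some (o_data w (x, k)).

Definition agree (m : nat) (u v : 'I_m -> option bool) : bool :=
  [forall k, (u k == None) || (v k == None) || (u k == v k)].

Definition faulty (w : outcome n N L) (x : addr_t n) (t : 'I_N) : bool :=
  [exists x' : addr_t n, exists t' : 'I_N,
     [&& x' != x, agree (read_addr w x t) (read_addr w x' t')
       & agree (read_data w x t) (read_data w x' t')]].

(* |Y_faulty| : number of faulty reads (multiset, counted over all M N reads) *)
Definition num_faulty (w : outcome n N L) : nat :=
  #|[set xt : addr_t n * 'I_N | faulty w xt.1 xt.2]|.

End Model.

Definition log2 {R : realType} (x : R) : R := ln x / ln 2.

(** The number of faulty reads is at most the number of ordered pairs of reads
    of strands with different addresses that agree, so by Markov's inequality
    [2 P(|Y_faulty| > 1)] is at most the expected number of agreeing pairs.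
    Two reads of strands [x != x'] agree on an address position where [x] and
    [x'] differ only if one of the two symbols is erased, which happens with
    probability [1 - (1-p)^2]; on a data position they agree with probability
    [1 - (1-p)^2/2], independently of everything else.  Summing over [x'] gives
    [(1 + 2p - p^2)^n - 1], hence the expectation is
    [2^n N^2 ((1 + 2p - p^2)^n - 1) (1 - (1-p)^2/2)^L], and the choice of [beta]
    makes it at most [eps1]. *)

From HB Require Import structures.
From mathcomp Require Import all_boot all_order all_algebra.
From mathcomp Require Import all_classical all_reals all_analysis.
From mathcomp Require Import ring lra.
Import Order.TTheory GRing.Theory Num.Theory.
Local Open Scope ring_scope.
Set Implicit Arguments. Unset Strict Implicit. Unset Printing Implicit Defensive.

Section ProductMeasure.
Variable R : comPzSemiRingType.

Lemma natr_forall (I : finType) (P : pred I) :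
  [forall i, P i]%:R = \prod_i (P i)%:R :> R.
Proof.
have [/forallP allP | /forallPn [i notPi]] := boolP [forall i, P i].
  by rewrite big1 // => i _; rewrite allP.
by rewrite (bigD1 i) //= (negbTE notPi) mul0r.
Qed.

Lemma sum_mul_natr_eq (T : finType) (F : T -> R) (a : T) :
  \sum_t F t * (t == a)%:R = F a.
Proof.
rewrite (bigD1 a) //= eqxx mulr1 big1 ?addr0 // => t /negbTE ->.
by rewrite mulr0.
Qed.

Variables (T : finType) (mu : T -> R).
Hypothesis mu_sum1 : \sum_t mu t = 1.

Lemma expect_cylinder (I J : finType) (e : J -> I) (c : J -> T) :
  injective e ->
  \sum_(f : {ffun I -> T}) (\prod_i mu (f i)) * \prod_j (f (e j) == c j)%:R =
  \prod_j mu (c j).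
Proof.
move=> inj_e.
have by_fibre (F : I -> J -> R) :
    \prod_j F (e j) j = \prod_i \prod_(j | e j == i) F i j.
  rewrite (partition_big e xpredT) //.
  by apply: eq_bigr => i _; apply: eq_bigr => j /eqP ->.
under [LHS]eq_bigr => f _ do rewrite (by_fibre (fun i j => (f i == c j)%:R)) -big_split /=.
rewrite -(bigA_distr_bigA (fun i t => mu t * \prod_(j | e j == i) (t == c j)%:R)).
rewrite (by_fibre (fun _ j => mu (c j))); apply: eq_bigr => i _ /=.
have [j /eqP <- | no_preimage] := pickP (fun j => e j == i).
  have fibre1 : (fun j' => e j' == e j) =1 pred1 j by move=> j'; exact: inj_eq.
  rewrite (big_pred1 j fibre1).
  by under eq_bigr do rewrite (big_pred1 j fibre1); rewrite sum_mul_natr_eq.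
rewrite (big_pred0 _ _ _ _ no_preimage) -[RHS]mu_sum1.
by apply: eq_bigr => t _; rewrite (big_pred0 _ _ _ _ no_preimage) mulr1.
Qed.

Lemma expect_prod_pairs (I K : finType) (e : K * bool -> I) (G : K -> T -> T -> R) :
  injective e ->
  \sum_(f : {ffun I -> T}) (\prod_i mu (f i)) *
     \prod_k G k (f (e (k, true))) (f (e (k, false))) =
  \prod_k \sum_a \sum_b mu a * mu b * G k a b.
Proof.
move=> inj_e.
have by_pairs (F : K * bool -> R) :
    \prod_kb F kb = \prod_k (F (k, true) * F (k, false)).
  transitivity (\prod_k \prod_b F (k, b)).
    by rewrite pair_bigA; apply: eq_bigr => -[].
  by apply: eq_bigr => k _; rewrite big_bool.
pose c (g : {ffun K -> T * T}) (kb : K * bool) :=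
  if kb.2 then (g kb.1).1 else (g kb.1).2.
(* Writing each factor as a sum over the possible values of its pair of
   coordinates reduces the claim to cylinder probabilities. *)
have expand (f : {ffun I -> T}) : \prod_k G k (f (e (k, true))) (f (e (k, false))) =
    \sum_(g : {ffun K -> T * T}) \prod_k G k (g k).1 (g k).2 *
                                 \prod_kb (f (e kb) == c g kb)%:R.
  transitivity (\prod_k \sum_(v : T * T) G k v.1 v.2 *
                   (v == (f (e (k, true)), f (e (k, false))))%:R).
    by apply: eq_bigr => k _; rewrite sum_mul_natr_eq.
  rewrite bigA_distr_bigA; apply: eq_bigr => g _.
  rewrite by_pairs -big_split /=; apply: eq_bigr => k _.
  rewrite /c /=; case: (g k) => a b.
  by rewrite -natrM mulnb xpair_eqE (eq_sym a) (eq_sym b).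
under [LHS]eq_bigr => f _ do rewrite expand mulr_sumr.
under [RHS]eq_bigr do rewrite pair_bigA.
rewrite exchange_big bigA_distr_bigA /=.
apply: eq_bigr => g _.
under eq_bigr do rewrite mulrCA.
rewrite -mulr_sumr expect_cylinder // by_pairs -big_split /=.
by apply: eq_bigr => k _; rewrite mulrC.
Qed.

End ProductMeasure.

Lemma sum_prod_mismatch (R : comPzSemiRingType) (K : finType) (x : K -> bool) (r : R) :
  \sum_(y : {ffun K -> bool}) \prod_k (if x k == y k then 1 else r) = (1 + r) ^+ #|K|.
Proof.
rewrite -(bigA_distr_bigA (fun k b => if x k == b then 1 else r)) -prodr_const.
by apply: eq_bigr => k _; rewrite big_bool; case: (x k) => //=; rewrite addrC.
Qed.

Lemma markov_nat (R : numDomainType) (S : finType) (wt : S -> R) (X : S -> nat)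
    (E : pred S) (k : nat) :
  (forall s, 0 <= wt s) -> (forall s, E s -> (k <= X s)%N) ->
  k%:R * \sum_(s | E s) wt s <= \sum_s wt s * (X s)%:R.
Proof.
move=> wt_ge0 EX.
rewrite mulr_sumr [X in _ <= X](bigID E) /= -[X in X <= _]addr0.
apply: lerD; first by apply: ler_sum => s Es; rewrite mulrC ler_wpM2l // ler_nat EX.
by apply: sumr_ge0 => s _; rewrite mulr_ge0.
Qed.

Lemma injective_switch (U K : finType) (u u' : U) : u != u' ->
  injective (fun kb : K * bool => (if kb.2 then u else u', kb.1)).
Proof.
move=> neq [k b] [k' b'] /= [+ ->]; case: b; case: b' => // eq_u;
  by rewrite eq_u eqxx in neq.
Qed.

Lemma expr_le_of_log2_bound (R : realType) (q a beta : R) (n L : nat) :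
  0 < q < 1 -> 0 < a -> (0 < n)%N -> L%:R = beta * n%:R ->
  log2 a / (n%:R * log2 q) <= beta -> q ^+ L <= a.
Proof.
move=> /andP[q0 q1] a0 n0 L_eq beta_ge.
have ln2_gt0 : 0 < ln (2 : R) by rewrite ln_gt0 // ltr1n.
have log2q_lt0 : log2 q < 0 by rewrite /log2 pmulr_llt0 ?invr_gt0 // ln_lt0 // q0.
rewrite ler_ndivrMr in beta_ge; last by rewrite pmulr_rlt0 ?ltr0n.
rewrite mulrA -L_eq /log2 mulrA in beta_ge.
rewrite -ler_ln ?posrE ?exprn_gt0 // lnXn // -mulr_natl.
by rewrite ler_pM2r ?invr_gt0 in beta_ge.
Qed.

Section ErasureModel.
Variables (R : realType) (n N L : nat) (p : R).

Definition erasure (b : bool) : R := if b then p else 1 - p.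

(* [erasure2] is the probability that at least one of two independent reads
   erases a given symbol, and [data_agreement = (1 + erasure2) / 2] the
   probability that reads of two independent uniform data bits agree. *)
Definition erasure2 : R := 1 - (1 - p) ^+ 2.

Definition data_agreement : R := 1 - 2^-1 * (1 - p) ^+ 2.

Lemma erasure_sum1 : \sum_b erasure b = 1.
Proof. by rewrite big_bool /erasure /= addrC subrK. Qed.

Lemma expect_erasure_agreement (U K : finType) (u u' : U) (c : K -> bool) :
  u != u' ->
  \sum_(f : {ffun U * K -> bool}) (\prod_j erasure (f j)) *
     \prod_k [|| f (u, k), f (u', k) | c k]%:R =
  \prod_k (if c k then 1 else erasure2).
Proof.
move=> neq.
rewrite (expect_prod_pairs erasure_sum1 (fun k a b => [|| a, b | c k]%:R)
                           (injective_switch (K := K) neq)).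
by apply: eq_bigr => k _; rewrite !big_bool /erasure /erasure2; case: (c k) => /=; ring.
Qed.

Lemma expect_data_agreement (U K : finType) (u u' : U) : u != u' ->
  \sum_(d : {ffun U * K -> bool}) (\prod_(j : U * K) 2^-1) *
     \prod_k (if d (u, k) == d (u', k) then 1 else erasure2) =
  data_agreement ^+ #|K|.
Proof.
move=> neq.
have half_sum1 : \sum_(b : bool) (2^-1 : R) = 1.
  by rewrite big_bool [RHS](splitr 1) mul1r.
rewrite (expect_prod_pairs half_sum1 (fun k a b => if a == b then 1 else erasure2)
                           (injective_switch (K := K) neq)).
rewrite -prodr_const; apply: eq_bigr => k _.
by rewrite !big_bool /= /erasure2 /data_agreement; field.
Qed.

Definition confusable (w : outcome n N L) (x : addr_t n) (t : 'I_N)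
    (x' : addr_t n) (t' : 'I_N) : bool :=
  [&& x' != x, agree (read_addr w x t) (read_addr w x' t')
    & agree (read_data w x t) (read_data w x' t')].

Lemma agree_read_addr (w : outcome n N L) x t x' t' :
  agree (read_addr w x t) (read_addr w x' t') =
  [forall k, [|| o_eA w (x, t, k), o_eA w (x', t', k) | x k == x' k]].
Proof.
apply: eq_forallb => k; rewrite /read_addr.
by case: (o_eA w (x, t, k)); case: (o_eA w (x', t', k)).
Qed.

Lemma agree_read_data (w : outcome n N L) x t x' t' :
  agree (read_data w x t) (read_data w x' t') =
  [forall k, [|| o_eD w (x, t, k), o_eD w (x', t', k)
               | o_data w (x, k) == o_data w (x', k)]].
Proof.
apply: eq_forallb => k; rewrite /read_data.
by case: (o_eD w (x, t, k)); case: (o_eD w (x', t', k)).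
Qed.

Lemma sum_outcome (F : outcome n N L -> R) :
  \sum_w F w = \sum_d \sum_eA \sum_eD F (d, eA, eD).
Proof. by rewrite pair_bigA pair_bigA; apply: eq_bigr => -[[]]. Qed.

Lemma prob_confusable (x : addr_t n) (t : 'I_N) (x' : addr_t n) (t' : 'I_N) :
  x' != x ->
  \sum_w weight p w * (confusable w x t x' t')%:R =
  (\prod_k (if x k == x' k then 1 else erasure2)) * data_agreement ^+ L.
Proof.
move=> neq.
have neq_read : (x, t) != (x', t') by rewrite xpair_eqE eq_sym (negbTE neq).
rewrite sum_outcome.
transitivity (\sum_(d : {ffun addr_t n * 'I_L -> bool})
  (\sum_(eA : {ffun addr_t n * 'I_N * 'I_n -> bool}) (\prod_j erasure (eA j)) *
      \prod_k [|| eA (x, t, k), eA (x', t', k) | x k == x' k]%:R) *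
  ((\prod_(j : addr_t n * 'I_L) 2^-1) *
   \sum_(eD : {ffun addr_t n * 'I_N * 'I_L -> bool}) (\prod_j erasure (eD j)) *
      \prod_k [|| eD (x, t, k), eD (x', t', k) | d (x, k) == d (x', k)]%:R)).
  apply: eq_bigr => d _; rewrite mulr_suml; apply: eq_bigr => eA _.
  rewrite !mulr_sumr; apply: eq_bigr => eD _.
  rewrite /confusable neq agree_read_addr agree_read_data /=.
  rewrite -mulnb natrM !natr_forall.
  by rewrite /weight /erasure /=; ring.
under [LHS]eq_bigr => d _ do rewrite !(expect_erasure_agreement _ neq_read).
by rewrite -mulr_sumr expect_data_agreement ?card_ord // eq_sym.
Qed.

Definition confusable_pairs (w : outcome n N L) : nat :=
  \sum_(xt : addr_t n * 'I_N) \sum_(xt' : addr_t n * 'I_N)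
     confusable w xt.1 xt.2 xt'.1 xt'.2.

Lemma num_faulty_le_confusable_pairs (w : outcome n N L) :
  (num_faulty w <= confusable_pairs w)%N.
Proof.
rewrite /num_faulty -sum1_card big_mkcond /=; apply: leq_sum => -[x t] _.
rewrite inE /=; case: ifP => // /existsP [x' /existsP [t' conf]].
have conf_pair : confusable w x t x' t' := conf.
by rewrite (bigD1 (x', t')) //= conf_pair.
Qed.

Lemma sum_prod_mismatch_neq (x : addr_t n) :
  \sum_(x' : addr_t n)
     (x' != x)%:R * \prod_k (if x k == x' k then 1 else erasure2) =
  (1 + erasure2) ^+ n - 1.
Proof.
have := sum_prod_mismatch x erasure2.
rewrite card_ord (bigD1 x) //= big1 // => [total|].
  rewrite -total addrC addrK [RHS]big_mkcond /=; apply: eq_bigr => x' _.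
  by case: (x' != x); rewrite ?mul1r ?mul0r.
by move=> k _; rewrite eqxx.
Qed.

Lemma expected_confusable_pairs :
  \sum_w weight p w * (confusable_pairs w)%:R =
  2 ^+ n * N%:R ^+ 2 * ((1 + 2 * p - p ^+ 2) ^+ n - 1) * data_agreement ^+ L.
Proof.
have per_pair x t x' t' : \sum_w weight p w * (confusable w x t x' t')%:R =
    (x' != x)%:R * \prod_k (if x k == x' k then 1 else erasure2) * data_agreement ^+ L.
  have [neq | /negPn/eqP ->] := boolP (x' != x).
    by rewrite prob_confusable // mul1r.
  by rewrite !mul0r big1 // => w _; rewrite /confusable eqxx mulr0.
transitivity (\sum_(xt : addr_t n * 'I_N) \sum_(xt' : addr_t n * 'I_N)
                \sum_w weight p w * (confusable w xt.1 xt.2 xt'.1 xt'.2)%:R).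
  under [LHS]eq_bigr => w _ do rewrite natr_sum mulr_sumr.
  rewrite exchange_big; apply: eq_bigr => xt _.
  under [LHS]eq_bigr => w _ do rewrite natr_sum mulr_sumr.
  by rewrite exchange_big.
under eq_bigr => xt _ do under eq_bigr => xt' _ do rewrite per_pair.
have per_read (x : addr_t n) :
    \sum_(xt' : addr_t n * 'I_N) (xt'.1 != x)%:R *
      \prod_k (if x k == xt'.1 k then 1 else erasure2) * data_agreement ^+ L =
    ((1 + erasure2) ^+ n - 1) * data_agreement ^+ L *+ N.
  rewrite -(pair_bigA _ (fun x' _ => (x' != x)%:R *
      \prod_k (if x k == x' k then 1 else erasure2) * data_agreement ^+ L)) /=.
  under eq_bigr do rewrite sumr_const card_ord.
  by rewrite sumrMnl -mulr_suml sum_prod_mismatch_neq.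
under eq_bigr do rewrite per_read.
rewrite sumr_const card_prod card_ffun card_bool !card_ord.
rewrite -mulrnA -[LHS]mulr_natr !natrM natrX.
have -> : 1 + erasure2 = 1 + 2 * p - p ^+ 2 by rewrite /erasure2; ring.
ring.
Qed.

Lemma weight_ge0 : 0 <= p <= 1 -> forall w : outcome n N L, 0 <= weight p w.
Proof.
move=> /andP[p_ge0 p_le1] w.
have erasure_ge0 b : 0 <= erasure b by case: b; rewrite /erasure ?subr_ge0.
rewrite /weight !mulr_ge0 //; apply: prodr_ge0 => j _;
  by rewrite ?invr_ge0 ?erasure_ge0.
Qed.

End ErasureModel.

Theorem lemma7 (R : realType) (n N L : nat) (p eps1 beta : R) :
  (1 <= n)%N -> (1 <= N)%N -> 0 < p < 1 -> 0 < eps1 < 1 -> 0 < beta ->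
  (0 < L)%N -> L%:R = beta * n%:R ->
  beta >= log2 (eps1 / (2 ^+ n * N%:R ^+ 2 * ((1 + 2 * p - p ^+ 2) ^+ n - 1)))
          / (n%:R * log2 (1 - 2^-1 * (1 - p) ^+ 2)) ->
  Prob (n := n) (N := N) (L := L) p (fun w => (1 < num_faulty w)%N) < eps1.
Proof.
move=> n_gt0 N_gt0 /andP[p_gt0 p_lt1] /andP[eps1_gt0 _] _ _ L_eq beta_ge.
set C := 2 ^+ n * N%:R ^+ 2 * _ in beta_ge.
have C_gt0 : 0 < C.
  have growth : 1 < 1 + 2 * p - p ^+ 2 by nra.
  by rewrite !mulr_gt0 ?exprn_gt0 ?ltr0n // subr_gt0 exprn_egt1 -?lt0n.
have agreement01 : 0 < data_agreement p < 1.
  by apply/andP; rewrite /data_agreement; split; nra.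
have := expr_le_of_log2_bound agreement01 (divr_gt0 eps1_gt0 C_gt0) n_gt0 L_eq beta_ge.
rewrite ler_pdivlMr // mulrC => tail_bound.
have p01 : 0 <= p <= 1 by rewrite !ltW.
have markov := markov_nat (E := fun w => (1 < num_faulty w)%N) (k := 2)
  (weight_ge0 (n := n) (N := N) (L := L) p01)
  (fun w many => leq_trans many (num_faulty_le_confusable_pairs w)).
rewrite expected_confusable_pairs -/C in markov.
rewrite /Prob; lra.
Qed.
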